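(* Let $\sigma>0$, $\zeta_*\in[0,1]$, $\gamma_*>0$, and $\nu_*=(1-\zeta_* )\delta_0+\zeta_*\delta_{\gamma_*}$. Let $S(0,0)$ be the set of probability distributions $\nu$ on $\mathbb{R}$ with $\nu((0,\infty))=0$. Then \[ \inf_{\nu\in S(0,0)}\|F_\nu-F_{\nu_*}\|_\infty\ \ge\ \zeta_*\left(\Phi_\sigma(\tfrac12\gamma_* )-\Phi_\sigma(-\tfrac12\gamma_* )\right), \] where $\Phi_\sigma$ is the CDF of $\mathcal{N}(0,\sigma^2)$. Furthermore, if $\gamma_*<\sigma$, then \[ \inf_{\nu\in S(0,0)}\|F_\nu-F_{\nu_*}\|_\infty\ \ge\ \frac{23\zeta_*\gamma_*}{24\sigma\sqrt{2\pi}}. \]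
   Context: $\delta_x$ denotes the point mass at $x$. For a probability distribution $\nu$ on $\mathbb{R}$, $F_\nu(t):=\mathbb{P}_{\mu\sim\nu,\,X\sim\mathcal{N}(\mu,\sigma^2)}(X\le t)$, and $\|\cdot\|_\infty$ is the sup norm over $t\in\mathbb{R}$. *)

From HB Require Import structures.
From mathcomp Require Import all_boot all_order all_algebra.
From mathcomp Require Import all_classical all_reals all_analysis.
Set Implicit Arguments. Unset Strict Implicit. Unset Printing Implicit Defensive.
Import Order.TTheory GRing.Theory Num.Theory.
Import numFieldNormedType.Exports.
Local Open Scope classical_set_scope.
Local Open Scope ring_scope.

(* Phi_sigma: the CDF of N(0, sigma^2)  (normal_prob m s has mean m, std s). *)
Definition Phi {R : realType} (sigma x : R) : R :=
  fine (normal_prob 0 sigma `]-oo, x]).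

(* F_nu(t) = P(X <= t) where mu ~ nu and X | mu ~ N(mu, sigma^2),
   i.e. the mixture probability  \int nu(dmu) P_{N(mu,sigma^2)}((-oo,t]). *)
Definition Fmix {R : realType} (sigma : R) (nu : set R -> \bar R) (t : R) : R :=
  fine (\int[nu]_(mu in setT) normal_prob mu sigma `]-oo, t])%E.

Definition supnorm {R : realType} (f : R -> R) : \bar R :=
  ereal_sup (range (fun t => (`| f t |)%:E)).

Definition S00 {R : realType} : set (probability R R) :=
  [set nu : probability R R | nu `]0%R, +oo[%classic = 0%E].

From HB Require Import structures.
From mathcomp Require Import all_boot all_order all_algebra.
From mathcomp Require Import all_classical all_reals all_analysis.
From mathcomp Require Import measurable_realfun.
From mathcomp Require Import lra ring.
Set Implicit Arguments. Unset Strict Implicit. Unset Printing Implicit Defensive.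

Import Order.TTheory GRing.Theory Num.Theory.
Import numFieldNormedType.Exports.
Local Open Scope classical_set_scope.
Local Open Scope ring_scope.

(* Every nu in S(0,0) is carried by (-oo, 0], and Phi is nondecreasing, so
   F_nu >= Phi pointwise, whereas F_{nu_*} = (1 - zeta) Phi + zeta Phi(. - gamma).
   At t = gamma/2 the difference is therefore at least
   zeta (Phi(gamma/2) - Phi(-gamma/2)).  For the explicit bound, exp(-u) >= 1 - u
   bounds the normal density below by the quadratic
   (1 - x^2/(2 sigma^2)) / (sigma sqrt(2 pi)), whose integral over
   [-gamma/2, gamma/2] is (gamma - gamma^3/(24 sigma^2)) / (sigma sqrt(2 pi));
   for gamma < sigma this is at least 23 gamma / (24 sigma sqrt(2 pi)). *)

Section normal_cdf.
Variables (R : realType) (sigma : R).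

Lemma normal_probNy_Phi x : normal_prob 0 sigma `]-oo, x] = (Phi sigma x)%:E.
Proof. by rewrite /Phi fineK// fin_num_measure. Qed.

Lemma Phi_ge0 x : 0 <= Phi sigma x.
Proof. by rewrite -lee_fin -normal_probNy_Phi measure_ge0. Qed.

Lemma Phi_le1 x : Phi sigma x <= 1.
Proof. by rewrite -lee_fin -normal_probNy_Phi probability_le1. Qed.

Lemma Phi_nondecreasing : {homo Phi sigma : x y / x <= y}.
Proof.
move=> x y xy; rewrite -lee_fin -!normal_probNy_Phi.
by apply: le_measure; rewrite ?inE//; apply: subset_itvl; rewrite bnd_simp.
Qed.

Lemma normal_prob_itv_oc a b : a <= b ->
  normal_prob 0 sigma `]a, b] = (Phi sigma b - Phi sigma a)%:E.
Proof.
move=> ab; have fin_oc : normal_prob 0 sigma `]a, b] \is a fin_num.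
  exact: fin_num_measure.
apply/eqP; rewrite EFinB eq_sym sube_eq ?fin_num_adde_defl//.
rewrite -!normal_probNy_Phi addeC -measureU//; last first.
  by apply/seteqP; split => x //=; rewrite !in_itv /= => -[xa /andP[ax _]]; lra.
by rewrite -itv_bndbnd_setU// bnd_simp.
Qed.

Lemma measurable_Phi_center t :
  measurable_fun setT (fun m : R => (Phi sigma (t - m))%:E).
Proof.
apply/measurable_EFinP/measurableT_comp; last exact: measurable_funB.
exact: nondecreasing_measurable Phi_nondecreasing.
Qed.

End normal_cdf.

Section centered_normal.
Variables (R : realType) (sigma : R).
Hypothesis sigma_gt0 : 0 < sigma.

Let sigma_neq0 : sigma != 0. Proof. by rewrite gt_eqF. Qed.

Lemma normal_pdf_center m x : normal_pdf m sigma x = normal_pdf 0 sigma (x - m).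
Proof. by rewrite /normal_pdf gt_eqF// /normal_fun subr0. Qed.

Lemma normal_probNy_center m t :
  normal_prob m sigma `]-oo, t] = normal_prob 0 sigma `]-oo, t - m].
Proof.
have shift_derive : ((fun x : R => x - m)^`())%classic = cst 1.
  by apply/funext => x; rewrite derive1E deriveD// derive_id derive_cst addr0.
rewrite /normal_prob (_ : t - m = (fun x => x - m) t)//.
rewrite (@increasing_ge0_integration_by_substitutionNy _ (fun x => x - m)).
- by apply: eq_integral => x _; rewrite normal_pdf_center shift_derive mulr1.
- by move=> x y _ _; rewrite ltrD2r.
- by rewrite shift_derive => x _; exact: cvg_cst.
- by rewrite shift_derive; exact: is_cvg_cst.
- by rewrite shift_derive; exact: cvg_cst.
- split; first by move=> x _; apply: derivableB.
  apply: cvg_at_left_filter; apply: (@cvgB _ R^o); first exact: cvg_id.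
  exact: cvg_cst.
- exact: cvg_addrr_Ny.
- by apply: continuous_subspaceT => x; exact: continuous_normal_pdf.
- by move=> x _; exact: normal_pdf_ge0.
Qed.

Lemma normal_probNyE m t : normal_prob m sigma `]-oo, t] = (Phi sigma (t - m))%:E.
Proof. by rewrite normal_probNy_center normal_probNy_Phi. Qed.

Lemma normal_pdf_ge_quadratic x :
  normal_peak sigma * (1 - x ^+ 2 / (sigma ^+ 2 *+ 2)) <= normal_pdf 0 sigma x.
Proof.
rewrite /normal_pdf gt_eqF// /normal_fun subr0 ler_wpM2l ?normal_peak_ge0//.
by rewrite -mulNr; exact: expR_ge1Dx.
Qed.

Lemma normal_peakE : normal_peak sigma = (sigma * Num.sqrt (2 * pi))^-1.
Proof.
rewrite /normal_peak -mulrnAr sqrtrM ?sqr_ge0// sqrtr_sqr gtr0_norm//.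
by rewrite -mulr_natl mulrC.
Qed.

Lemma Phi_symmetric_gap_ge a : 0 < a <= sigma ->
  normal_peak sigma * (2 * a - a ^+ 3 / (sigma ^+ 2 *+ 3)) <=
  Phi sigma a - Phi sigma (- a).
Proof.
move=> /andP[a_gt0 a_le].
pose f x := normal_peak sigma * (1 - x ^+ 2 / (sigma ^+ 2 *+ 2)).
pose F x := normal_peak sigma * (x - x ^+ 3 / (sigma ^+ 2 *+ 6)).
have dF x : is_derive x (1 : R) F (f x).
  rewrite /F /f; apply: is_derive_eq.
  by rewrite /GRing.scale /= !(mulr0, addr0, mulr1); field.
have cf : continuous f.
  by move=> x; apply/differentiable_continuous/derivable1_diffP; case: (dF x).
have int_f : (\int[lebesgue_measure]_(x in `[(- a)%R, a]) (f x)%:E =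
    (F a - F (- a))%:E)%E.
  rewrite (@continuous_FTC2 _ f F) //; first lra.
  - exact: continuous_subspaceT.
  - split; first by move=> x _; case: (dF x).
    + apply/cvg_at_right_filter/differentiable_continuous/derivable1_diffP.
      by case: (dF (- a)).
    + apply/cvg_at_left_filter/differentiable_continuous/derivable1_diffP.
      by case: (dF a).
  - by move=> x _; rewrite derive1E; case: (dF x).
have -> : normal_peak sigma * (2 * a - a ^+ 3 / (sigma ^+ 2 *+ 3)) =
    F a - F (- a) by rewrite /F; field.
rewrite -lee_fin -normal_prob_itv_oc; last lra.
rewrite /normal_prob integral_itv_obnd_cbnd; last first.
  by apply/measurable_funTS/measurable_EFinP; exact: measurable_normal_pdf.
rewrite -int_f; apply: ge0_le_integral => //.
- move=> x; rewrite /= in_itv /= => /andP[xa ax]; rewrite lee_fin.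
  rewrite mulr_ge0 ?normal_peak_ge0// subr_ge0 ler_pdivrMr; last first.
    by rewrite pmulrn_lgt0// exprn_gt0.
  by rewrite mul1r; nra.
- by apply/measurable_funTS/measurable_EFinP; exact: continuous_measurable_fun.
- by apply/measurable_funTS/measurable_EFinP; exact: measurable_normal_pdf.
- by move=> x _; rewrite lee_fin; exact: normal_pdf_ge_quadratic.
Qed.

Lemma Phi_symmetric_gap_ge_linear gamma : 0 < gamma < sigma ->
  23 * gamma / (24 * sigma * Num.sqrt (2 * pi)) <=
  Phi sigma (gamma / 2) - Phi sigma (- (gamma / 2)).
Proof.
move=> /andP[gamma_gt0 gamma_lt].
have half_le : 0 < gamma / 2 <= sigma by apply/andP; split; lra.
apply: (le_trans _ (Phi_symmetric_gap_ge half_le)).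
have sqrt_gt0 : 0 < Num.sqrt (2 * pi : R) by rewrite sqrtr_gt0 mulr_gt0// pi_gt0.
have ratio_le1 : gamma ^+ 2 / sigma ^+ 2 <= 1.
  by rewrite ler_pdivrMr ?exprn_gt0// mul1r; nra.
have -> : 23 * gamma / (24 * sigma * Num.sqrt (2 * pi)) =
    (sigma * Num.sqrt (2 * pi))^-1 * (23 * gamma / 24).
  by field; rewrite gt_eqF// sigma_neq0.
have -> : (gamma / 2) ^+ 3 / (sigma ^+ 2 *+ 3) =
    gamma / 24 * (gamma ^+ 2 / sigma ^+ 2) by field.
rewrite normal_peakE ler_pM2l ?invr_gt0 ?mulr_gt0//.
nra.
Qed.

End centered_normal.

Section normal_mixture.
Variables (R : realType) (sigma : R).
Hypothesis sigma_gt0 : 0 < sigma.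

Lemma FmixE (nu : probability R R) t :
  (Fmix sigma nu t)%:E = (\int[nu]_(m in setT) (Phi sigma (t - m))%:E)%E.
Proof.
rewrite /Fmix; under eq_integral do rewrite (normal_probNyE sigma_gt0).
apply: fineK; rewrite ge0_fin_numE; last first.
  by apply: integral_ge0 => m _; rewrite lee_fin Phi_ge0.
apply: (@le_lt_trans _ _ (\int[nu]_(m in setT) (cst 1%E m))%E); last first.
  by rewrite integral_cst// mul1e (le_lt_trans (probability_le1 _ _)) ?ltry.
apply: ge0_le_integral => //.
- by move=> m _; rewrite lee_fin Phi_ge0.
- exact: measurable_Phi_center.
- by move=> m _; rewrite lee_fin Phi_le1.
Qed.

Lemma Fmix_ge_Phi (nu : probability R R) t :
  nu `]0, +oo[%classic = 0%E -> Phi sigma t <= Fmix sigma nu t.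
Proof.
move=> nu_pos0; rewrite -lee_fin FmixE.
have nu_npos1 : nu `]-oo, 0%R]%classic = 1%E.
  by rewrite -setCitvr probability_setC// nu_pos0 sube0.
apply: (@le_trans _ _
  (\int[nu]_(m in `]-oo, 0%R]) (Phi sigma (t - m))%:E)%E); last first.
  apply: ge0_subset_integral => //; first exact: measurable_Phi_center.
  by move=> m _; rewrite lee_fin Phi_ge0.
apply: (@le_trans _ _ (\int[nu]_(m in `]-oo, 0%R]) (cst (Phi sigma t)%:E m))%E).
  rewrite integral_cst// (_ : (_ * _)%E = (Phi sigma t)%:E)//.
  by rewrite -[RHS]mule1; congr (_ * _)%E; exact: nu_npos1.
apply: ge0_le_integral => //.
- by move=> m _; rewrite lee_fin Phi_ge0.
- exact: measurable_funTS (measurable_Phi_center sigma t).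
- move=> m; rewrite /= in_itv /= => m_le0.
  by rewrite lee_fin Phi_nondecreasing//; lra.
Qed.

Lemma Fmix_two_point (nu : probability R R) (zeta gamma t : R) : 0 <= zeta <= 1 ->
  (forall A : set R, measurable A ->
     nu A = ((1 - zeta)%:E * \d_(0%R : R) A + zeta%:E * \d_gamma A)%E) ->
  Fmix sigma nu t = (1 - zeta) * Phi sigma t + zeta * Phi sigma (t - gamma).
Proof.
move=> /andP[zeta_ge0 zeta_le1] nuE.
have zetaC_ge0 : 0 <= 1 - zeta by rewrite subr_ge0.
pose mix := measure_add (mscale (NngNum zetaC_ge0) \d_(0%R : R))
                        (mscale (NngNum zeta_ge0) \d_gamma).
have Phi_center_ge0 m : [set: R] m -> (0 <= (Phi sigma (t - m))%:E)%E.
  by move=> _; rewrite lee_fin Phi_ge0.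
have mPhi := measurable_Phi_center sigma t.
apply: EFin_inj; rewrite FmixE (eq_measure_integral mix); last first.
  by move=> A mA _; apply: eq_trans (nuE A mA) _; rewrite [RHS]measure_addE.
rewrite ge0_integral_measure_add// !ge0_integral_mscale// !integral_dirac//.
by rewrite !diracT !mul1e subr0.
Qed.

End normal_mixture.

Lemma supnorm_ge {R : realType} (f : R -> R) t : ((`|f t|)%:E <= supnorm f)%E.
Proof. by apply: ereal_sup_ubound; exists t. Qed.

Theorem lemma2 (R : realType) (sigma zeta gamma : R) (nu_star : probability R R) :
  0 < sigma -> 0 <= zeta <= 1 -> 0 < gamma ->
  (forall A : set R, measurable A ->
     nu_star A = ((1 - zeta)%:E * \d_(0%R : R) A + zeta%:E * \d_gamma A)%E) ->
  ((zeta * (Phi sigma (gamma / 2) - Phi sigma (- (gamma / 2))))%R%:E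
     <= ereal_inf [set supnorm (fun t => (Fmix sigma nu t - Fmix sigma nu_star t)%R)
                  | nu in S00])%E
  /\
  ((gamma < sigma)%R ->
   ((23 * zeta * gamma) / (24 * sigma * Num.sqrt (2 * pi)))%R%:E
     <= ereal_inf [set supnorm (fun t => (Fmix sigma nu t - Fmix sigma nu_star t)%R)
                  | nu in S00])%E.
Proof.
move=> sigma_gt0 zeta01 gamma_gt0 nu_starE.
have zeta_ge0 : 0 <= zeta by case/andP: zeta01.
set inf_dist := ereal_inf _.
have gap_le_inf :
    ((zeta * (Phi sigma (gamma / 2) - Phi sigma (- (gamma / 2))))%:E <= inf_dist)%E.
  apply/ereal_infP => _ [nu nu_S00 <-].
  apply: le_trans (supnorm_ge _ (gamma / 2)); rewrite lee_fin.
  apply: le_trans (ler_norm _).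
  have := Fmix_ge_Phi sigma_gt0 (gamma / 2) nu_S00.
  rewrite (Fmix_two_point sigma_gt0 (gamma / 2) zeta01 nu_starE).
  rewrite (_ : gamma / 2 - gamma = - (gamma / 2)); last by field.
  by move=> Fmix_ge; nra.
split=> // gamma_lt; apply: le_trans gap_le_inf; rewrite lee_fin.
rewrite -mulrA (mulrC 23) -!mulrA; apply: ler_wpM2l => //; rewrite !mulrA.
by apply: Phi_symmetric_gap_ge_linear => //; apply/andP.
Qed.
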